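(* Let $(l_n)_{n\ge 1}$, $(r_n)_{n\ge 1}$ be real numbers with $l_n,r_n>0$ and $l_n+r_n=1$, let $k\ge 1$ be an integer, and let $(X_m)_{m\ge 0}$ be the birth-death chain with these probabilities and $X_0=k$; let $T_\Delta$ be its first hitting time of $0$, and assume $P(T_\Delta<\infty)=1$. Let $t_0=1$, $t_n=\frac{l_1\cdots l_n}{r_1\cdots r_n}$ for $n\ge1$, and $x_n=\sum_{i=0}^{n-1}t_i$. For a random time $T$ and $n\ge 1$, let $G_T^n$ denote the number of times $m\in\{0,\dots,T-1\}$ with $X_m=n$. Let $(T_m)_{m\ge1}$ be a non-decreasing sequence of stopping times with $E[T_m]<\infty$ and $T_m\to T_\Delta$ almost surely. Then for every $n\ge 1$, $$E[G_{T_\Delta}^n]=\lim_{m\to\infty}E[G_{T_m}^n]=\frac{\min(x_n,x_k)}{t_{n-1}l_n}.$$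
   Context: The birth-death chain: $(X_m)$ is a Markov chain on the nonnegative integers which from a state $n\ge 1$ moves to $n+1$ with probability $r_n$ and to $n-1$ with probability $l_n$, and for which $0$ is absorbing. Stopping times are with respect to the natural filtration of $(X_m)$. *)

From HB Require Import structures.
From mathcomp Require Import all_boot all_order all_algebra.
From mathcomp Require Import all_classical all_reals all_analysis.
Set Implicit Arguments. Unset Strict Implicit. Unset Printing Implicit Defensive.
Import Order.TTheory GRing.Theory Num.Theory.
Local Open Scope classical_set_scope.
Local Open Scope ring_scope.

Definition bd_trans {R : realType} (l r : nat -> R) (x y : nat) : R :=
  if x == 0%N then (if y == 0%N then 1 else 0)
  else if y == x.+1 then r x
  else if y.+1 == x then l x
  else 0.

(* (X_m) is a Markov chain with transition kernel bd_trans l r and X_0 = k a.s.,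
   stated through its finite-dimensional distributions (discrete state space). *)
Definition is_bd_chain {d} {T : measurableType d} {R : realType}
  (P : probability T R) (l r : nat -> R) (k : nat) (X : nat -> T -> nat) : Prop :=
  (forall m j, measurable [set w | X m w = j]) /\
  P [set w | X 0%N w = k] = 1%E /\
  (forall (m : nat) (s : nat -> nat) (y : nat),
     P [set w | (forall i, (i <= m)%N -> X i w = s i) /\ X m.+1 w = y] =
     (P [set w | forall i, (i <= m)%N -> X i w = s i] * (bd_trans l r (s m) y)%:E)%E).

(* Random times with values in nat ∪ {∞}: None = ∞. *)
Definition etime {R : realType} (t : option nat) : \bar R :=
  match t with Some n => (n%:R)%:E | None => +oo%E end.

(* Stopping time w.r.t. the natural filtration of X: each event {T = n}
   belongs to σ(X_0,...,X_n) (X is nat-valued, so these are exactly the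
   preimages of subsets of nat^(n+1)). *)
Definition stopping_time {T : Type} (X : nat -> T -> nat) (tau : T -> option nat) : Prop :=
  forall n : nat, exists B : set (seq nat),
    [set w | tau w = Some n] = [set w | B [seq X i w | i <- iota 0 n.+1]].

Definition hit0 {T : Type} (X : nat -> T -> nat) (w : T) : option nat :=
  match pselect (exists m, X m w == 0%N) with
  | left h => Some (ex_minn h)
  | right _ => None
  end.

Definition Gcount {R : realType} {T : Type} (X : nat -> T -> nat)
  (tau : T -> option nat) (n : nat) (w : T) : \bar R :=
  (\sum_(i <oo) (((X i w == n) && (etime (tau w) > ((i%:R : R))%:E)%E)%:R : R)%:E)%E.

Definition tseq {R : realType} (l r : nat -> R) (n : nat) : R :=
  \prod_(0 <= i < n) (l i.+1 / r i.+1).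

Definition xseq {R : realType} (l r : nat -> R) (n : nat) : R :=
  \sum_(0 <= i < n) tseq l r i.

From HB Require Import structures.
From mathcomp Require Import all_boot all_order all_algebra.
From mathcomp Require Import all_classical all_reals all_analysis.
From mathcomp Require Import measurable_realfun zify ring lra.
Import Order.TTheory GRing.Theory Num.Theory.
Local Open Scope classical_set_scope.
Local Open Scope ring_scope.
Set Implicit Arguments. Unset Strict Implicit. Unset Printing Implicit Defensive.

(* Let A(i, j) ([avoid0_at X i j]) be the event that the chain is at j at time i without
   having visited 0 before, so that g_j := E[G^j_{T_Delta}] = sum_i P(A(i, j)).  One step of
   the Markov property gives P(A(i+1, j)) = r_{j-1} P(A(i, j-1)) + l_{j+1} P(A(i, j+1)), the
   first term only for j > 1.  Summing over i yields the balance equations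
   g_j = [j = k] + r_{j-1} g_{j-1} + l_{j+1} g_{j+1}, and P(T_Delta < oo) = l_1 g_1 = 1.
   These equations determine g recursively, and min(x_j, x_k) / (t_{j-1} l_j) solves them.
   For the limit, G^n_{T_m} increases with m, and wherever T_Delta is finite the integer
   times T_m are eventually equal to it; monotone convergence concludes. *)

Definition bd_rates {R : realType} (l r : nat -> R) : Prop :=
  forall n, (1 <= n)%N -> 0 < l n /\ 0 < r n /\ l n + r n = 1.

Lemma bd_trans_ge0 (R : realType) (l r : nat -> R) :
  bd_rates l r -> forall a j, 0 <= bd_trans l r a j.
Proof.
move=> hp a j; rewrite /bd_trans; case: eqP => [_|/eqP a0]; first by case: ifP.
have [l0 [r0 _]] := hp a ltac:(by rewrite lt0n).
by case: ifP => _; [exact: ltW|case: ifP => _; [exact: ltW|]].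
Qed.

Lemma bd_trans_far (R : realType) (l r : nat -> R) a j :
  a != 0%N -> a != j.+1 -> a != j.-1 -> bd_trans l r a j = 0.
Proof.
move=> a0 a1 a2; rewrite /bd_trans (negbTE a0).
case: ifP => [/eqP ja|_]; first by move: a2; rewrite ja /= eqxx.
by case: ifP => [/eqP ja|//]; move: a1; rewrite ja eqxx.
Qed.

Section ereal_series.
Variable R : realType.
Implicit Types f : nat -> \bar R.

Lemma nneseriesZr f (c : R) : (forall i, (0 <= f i)%E) ->
  (\sum_(i <oo) (f i * c%:E) = (\sum_(i <oo) f i) * c%:E)%E.
Proof.
by move=> f0; rewrite muleC -nneseriesZl //; apply: eq_eseriesr => i _; exact: muleC.
Qed.

Lemma nneseries_recl0 f : (forall i, (0 <= f i)%E) ->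
  (\sum_(i <oo) f i = f 0%N + \sum_(i <oo) f i.+1)%E.
Proof.
move=> f0; rewrite nneseries_recl // -(nneseries_addn 1) //.
by under eq_eseriesr do rewrite addn1.
Qed.

Lemma EFin_affine_unique (x : \bar R) (a b c y : R) : (0 <= x)%E -> 0 < c ->
  a%:E = (b%:E + x * c%:E)%E -> a = b + y * c -> x = y%:E.
Proof.
case: x => [x| |] // _ c0.
- rewrite -EFinM -EFinD => -[ha] hb; congr (_%:E).
  by apply: (mulIf (lt0r_neq0 c0)); lra.
- by rewrite gt0_mulye ?lte_fin // addey.
Qed.

End ereal_series.

Definition mixed_cylinder {T : Type} (X : nat -> T -> nat) (m j : nat)
    (C : nat -> set nat) (s : nat -> nat) : set T :=
  [set w | forall i, (i <= m)%N -> if (i < j)%N then C i (X i w) else X i w = s i].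

Definition prefix_event {T : Type} (X : nat -> T -> nat) (m : nat)
    (C : nat -> set nat) (a : nat) : set T :=
  [set w | (forall i, (i < m)%N -> C i (X i w)) /\ X m w = a].

Definition avoid0_at {T : Type} (X : nat -> T -> nat) (i j : nat) : set T :=
  prefix_event X i (fun=> [set a | a <> 0%N]) j.

Lemma prefix_eventE {T : Type} (X : nat -> T -> nat) m C a :
  prefix_event X m C a = mixed_cylinder X m m C (fun=> a).
Proof.
apply/seteqP; split => [w [HC Ha] i im|w H].
  by case: ltnP => [/HC //|mi]; rewrite (@anti_leq i m) ?im.
split; last by have := H m (leqnn m); rewrite ltnn.
by move=> i im; have := H i (ltnW im); rewrite im.
Qed.

Section cylinder_measurability.
Context d (T : measurableType d) (X : nat -> T -> nat).
Hypothesis mX : forall m j, measurable [set w | X m w = j].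

Lemma measurable_state_preimage m (B : set nat) : measurable [set w | B (X m w)].
Proof.
have -> : [set w | B (X m w)] = \bigcup_(j in B) [set w | X m w = j].
  by apply/seteqP; split => [w Bw|w [j Bj /= ->]]; [exists (X m w)|].
by apply: bigcup_measurable => j _; exact: mX.
Qed.

Lemma measurable_path_preimage len a (B : set (seq nat)) :
  measurable [set w | B [seq X i w | i <- iota a len]].
Proof.
elim: len a B => [|len IH] a B /=.
  have [B0|nB0] := pselect (B [::]).
  - by rewrite (_ : [set _ | _] = setT) //; apply/seteqP; split.
  - by rewrite (_ : [set _ | _] = set0) //; apply/seteqP; split.
have -> : [set w | B (X a w :: [seq X i w | i <- iota a.+1 len])] =
    \bigcup_(x in setT) ([set w | X a w = x] `&`
                         [set w | B (x :: [seq X i w | i <- iota a.+1 len])]).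
  by apply/seteqP; split => [w Bw|w [x _ [/= -> //]]]; exists (X a w).
apply: bigcupT_measurable => x; apply: measurableI; first exact: mX.
exact: (IH a.+1 (fun s => B (x :: s))).
Qed.

Lemma measurable_mixed_cylinder m j C s : measurable (mixed_cylinder X m j C s).
Proof.
have mXC i : measurable (if (i < j)%N then [set w | C i (X i w)] else [set w | X i w = s i]).
  by case: ifP => _; [exact: measurable_state_preimage|exact: mX].
elim: m => [|m IH].
  rewrite (_ : mixed_cylinder X 0 j C s = if (0 < j)%N then [set w | C 0%N (X 0%N w)]
                                           else [set w | X 0%N w = s 0%N]); first exact: mXC.
  apply/seteqP; split => [w H|w H i]; first by have := H 0%N (leqnn 0); case: ifP.
  by rewrite leqn0 => /eqP ->; case: ifP H.
rewrite (_ : mixed_cylinder X m.+1 j C s = mixed_cylinder X m j C s `&`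
   (if (m.+1 < j)%N then [set w | C m.+1 (X m.+1 w)] else [set w | X m.+1 w = s m.+1])).
  exact: measurableI.
apply/seteqP; split => [w H|w [H1 H2] i].
  split; first by move=> i im; apply: H; exact: leqW.
  by have := H m.+1 (leqnn _); case: ifP.
rewrite leq_eqVlt => /orP[/eqP ->|]; first by case: ifP H2.
by rewrite ltnS; exact: H1.
Qed.

Lemma measurable_avoid0_at i j : measurable (avoid0_at X i j).
Proof. by rewrite /avoid0_at prefix_eventE; exact: measurable_mixed_cylinder. Qed.

End cylinder_measurability.

Definition mean_visits {d} {T : measurableType d} {R : realType} (P : probability T R)
    (X : nat -> T -> nat) (j : nat) : \bar R :=
  (\sum_(i <oo) P (avoid0_at X i j))%E.

Section markov_property.
Context d (T : measurableType d) (R : realType) (P : probability T R)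
  (l r : nat -> R) (k : nat) (X : nat -> T -> nat).
Hypothesis hX : is_bd_chain P l r k X.

Let mX : forall m j, measurable [set w | X m w = j] := hX.1.

Lemma markov_mixed_cylinder m y j C s : (j <= m)%N ->
  P (mixed_cylinder X m j C s `&` [set w | X m.+1 w = y]) =
  (P (mixed_cylinder X m j C s) * (bd_trans l r (s m) y)%:E)%E.
Proof.
elim: j C s => [|j IH] C s jm; first exact: hX.2.2.
(* Split on the value [b] of [X_j]: this turns the constraint at [j] into an exact value. *)
pose sb b (i : nat) : nat := if i == j then b else s i.
have sbm b : sb b m = s m by rewrite /sb (gtn_eqF jm).
have -> : mixed_cylinder X m j.+1 C s = \bigcup_(b in C j) mixed_cylinder X m j C (sb b).
  apply/seteqP; split => [w H|w [b Cb H] i im].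
    exists (X j w); first by have := H j (ltnW jm); rewrite ltnSn.
    move=> i im; have := H i im; rewrite /sb ltnS.
    by case: (ltngtP i j) => [ij|ji|->]; rewrite ?eqxx ?ltnn.
  have := H i im; rewrite /sb ltnS.
  by case: (ltngtP i j) => [ij|ji|->]; rewrite ?eqxx ?ltnn // => ->.
have disj (Y : set T) : trivIset (C j) (fun b => mixed_cylinder X m j C (sb b) `&` Y).
  move=> b1 b2 _ _ [w [[H1 _] [H2 _]]].
  by have := H1 j (ltnW jm); have := H2 j (ltnW jm); rewrite /sb ltnn eqxx => <-.
have mC b : measurable (mixed_cylinder X m j C (sb b)) by exact: measurable_mixed_cylinder.
rewrite setI_bigcupl measure_bigcup; last 2 first.
- by move=> b _; apply: measurableI => //; exact: mX.
- exact: disj.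
rewrite measure_bigcup //; last by have := disj setT; under eq_fun do rewrite setIT.
rewrite muleC -nneseriesZl //; apply: eq_eseriesr => b _.
by rewrite muleC -(sbm b); apply: IH; exact: ltnW.
Qed.

Lemma markov_prefix_event m C a y :
  P (prefix_event X m C a `&` [set w | X m.+1 w = y]) =
  (P (prefix_event X m C a) * (bd_trans l r a y)%:E)%E.
Proof. by rewrite prefix_eventE; exact: markov_mixed_cylinder. Qed.

Lemma P_avoid0_at_succ i j : P (avoid0_at X i.+1 j) =
  (\sum_(a <oo | a \in [set a | a <> 0%N]) (P (avoid0_at X i a) * (bd_trans l r a j)%:E))%E.
Proof.
have -> : avoid0_at X i.+1 j =
    \bigcup_(a in [set a | a <> 0%N]) (avoid0_at X i a `&` [set w | X i.+1 w = j]).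
  apply/seteqP; split => [w [H1 H2]|w [a a0 [[H1 H2] H3]]].
    exists (X i w); first exact: H1.
    by split => //; split => // i' i'i; apply: H1; exact: ltnW.
  split => // i'; rewrite ltnS leq_eqVlt => /orP[/eqP ->|]; first by rewrite H2.
  exact: H1.
rewrite measure_bigcup; last 2 first.
- by move=> a _; apply: measurableI; [exact: measurable_avoid0_at|exact: mX].
- by move=> a1 a2 _ _ [w [[[_ <-] _] [[_ <-] _]]].
by apply: eq_eseriesr => a _; exact: markov_prefix_event.
Qed.

Lemma P_avoid0_at0 j : P (avoid0_at X 0 j) = (if j == k then 1 else 0)%E.
Proof.
have -> : avoid0_at X 0 j = [set w | X 0%N w = j].
  by apply/seteqP; split => [w [] //|w H]; split.
case: eqP => [->|jk]; first exact: hX.2.1.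
apply/eqP; rewrite eq_le measure_ge0 andbT.
have <- : P (~` [set w | X 0%N w = k]) = 0%E by rewrite probability_setC // hX.2.1 subee.
by apply: le_measure; rewrite ?inE //; [exact: measurableC|move=> w /= ->].
Qed.

Hypothesis hp : bd_rates l r.

Lemma P_avoid0_at_succE i j : P (avoid0_at X i.+1 j) =
  ((if (1 < j)%N then P (avoid0_at X i j.-1) * (r j.-1)%:E else 0) +
   P (avoid0_at X i j.+1) * (l j.+1)%:E)%E.
Proof.
have f0 a : (0 <= P (avoid0_at X i a) * (bd_trans l r a j)%:E)%E.
  by apply: mule_ge0 => //; rewrite lee_fin; exact: bd_trans_ge0.
rewrite P_avoid0_at_succ (@nneseriesD1 _ _ j.+1) //; last by rewrite inE.
have -> : bd_trans l r j.+1 j = l j.+1 by rewrite /bd_trans /= eqxx; case: ifP => // /eqP; lia.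
rewrite addeC; congr (_ + _)%E.
case: ifP => j1.
  rewrite (@nneseriesD1 _ _ j.-1); last 2 first.
  - by move=> a _; exact: f0.
  - by apply/andP; split; [rewrite inE /=; lia|apply/eqP; lia].
  have -> : bd_trans l r j.-1 j = r j.-1.
    by rewrite /bd_trans (_ : (j.-1 == 0%N) = false) ?prednK ?eqxx //; apply/eqP; lia.
  rewrite -[RHS]adde0; congr (_ + _)%E.
  apply: eseries0 => a _ /andP[/andP[]]; rewrite inE /= => a0 a1 a2.
  by rewrite bd_trans_far ?mule0 //; apply/eqP.
apply: eseries0 => a _ /andP[]; rewrite inE /= => a0 a1.
by rewrite bd_trans_far ?mule0 //; apply/eqP => // ha; move: a0; rewrite ha; lia.
Qed.

Lemma mean_visits_balance j : mean_visits P X j =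
  ((if j == k then 1 else 0) +
   (if (1 < j)%N then mean_visits P X j.-1 * (r j.-1)%:E else 0) +
   mean_visits P X j.+1 * (l j.+1)%:E)%E.
Proof.
rewrite /mean_visits nneseries_recl0 // P_avoid0_at0 -addeA; congr (_ + _)%E.
transitivity (\sum_(i <oo) ((if (1 < j)%N then P (avoid0_at X i j.-1) * (r j.-1)%:E else 0) +
                             P (avoid0_at X i j.+1) * (l j.+1)%:E))%E.
  by apply: eq_eseriesr => i _; exact: P_avoid0_at_succE.
have [l0 _] := hp (ltn0Sn j).
rewrite nneseriesD; last 2 first.
- move=> i _ _; case: ifP => // j1; apply: mule_ge0 => //.
  by have [_ [r0 _]] := @hp j.-1 ltac:(lia); rewrite lee_fin; exact: ltW.
- by move=> i _ _; apply: mule_ge0 => //; rewrite lee_fin; exact: ltW.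
rewrite nneseriesZr //; congr (_ + _)%E.
by case: ifP => j1; [rewrite nneseriesZr|apply: eseries0].
Qed.

End markov_property.

Section hitting_time.
Context {T : Type} (X : nat -> T -> nat).

Lemma hit0_finite w : hit0 X w <> None <-> exists m, X m w = 0%N.
Proof.
rewrite /hit0; case: pselect => [[m h]|h]; split => //.
- by move=> _; exists m; apply/eqP.
- by case=> m hm; case: h; exists m; apply/eqP.
Qed.

Lemma lt_etime_hit0 (R : realType) w i :
  ((i%:R : R)%:E < etime (hit0 X w))%E <-> forall i', (i' <= i)%N -> X i' w <> 0%N.
Proof.
rewrite /hit0; case: pselect => [h|h] /=; last first.
  by split => [_ i' _ /eqP h0|_]; [apply: h; exists i'|exact: ltey].
case: ex_minnP => m /eqP hm hmin; rewrite lte_fin ltr_nat; split.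
  move=> im i' i'i /eqP/hmin; rewrite leqNgt => /negP; apply.
  exact: leq_ltn_trans i'i im.
by move=> H; rewrite ltnNge; apply/negP => mi; exact: (H m mi).
Qed.

Lemma hit0_finiteE : [set w | hit0 X w <> None] = \bigcup_(i in setT) avoid0_at X i 0.
Proof.
apply/seteqP; split => [w /hit0_finite ex0|w [i _ [_ H]]]; last by apply/hit0_finite; exists i.
have ex0' : exists m, X m w == 0%N by case: ex0 => m hm; exists m; apply/eqP.
case: (ex_minnP ex0') => m /eqP hm hmin.
exists m => //; split => // i' i'm /eqP/hmin; by rewrite leqNgt i'm.
Qed.

Lemma Gcount_hit0 (R : realType) n w : (1 <= n)%N ->
  Gcount (R:=R) X (hit0 X) n w = (\sum_(i <oo) (\1_(avoid0_at X i n) w : R)%:E)%E.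
Proof.
move=> n1; apply: eq_eseriesr => i _; rewrite indicE; congr ((nat_of_bool _)%:R%:E).
apply/idP/idP.
  move=> /andP[/eqP hX /lt_etime_hit0 H]; rewrite inE; split => // i' i'i.
  by apply: H; exact: ltnW.
rewrite inE => -[H hX]; rewrite hX eqxx /=; apply/(lt_etime_hit0 _ _ i).
move=> i'; rewrite leq_eqVlt => /orP[/eqP ->|]; last exact: H.
by rewrite hX; lia.
Qed.

Lemma lt_etime (R : realType) (t : option nat) i :
  ((i%:R : R)%:E < etime t)%E <-> ~ exists2 j, (j <= i)%N & t = Some j.
Proof.
case: t => [j|] /=; last by split => [_ [j _ //]|_]; exact: ltey.
rewrite lte_fin ltr_nat ltnNge; split => [/negP ij [j' j'i [jj']]|H].
  by apply: ij; rewrite jj'.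
by apply/negP => ji; apply: H; exists j.
Qed.

Lemma le_Gcount (R : realType) (s t : T -> option nat) n w :
  (etime (s w) <= etime (t w) :> \bar R)%E -> (Gcount X s n w <= Gcount X t n w :> \bar R)%E.
Proof.
move=> st; apply: lee_nneseries => [i _ _|i _]; rewrite lee_fin ?ler_nat //.
case: (X i w == n) => //=; case: ltP => //= hs.
by rewrite (lt_le_trans hs st).
Qed.

End hitting_time.

Section Gcount_measurability.
Context d (T : measurableType d) (R : realType) (X : nat -> T -> nat).
Hypothesis mX : forall m j, measurable [set w | X m w = j].

Lemma measurable_stopping_time (tau : T -> option nat) j :
  stopping_time X tau -> measurable [set w | tau w = Some j].
Proof. by move=> /(_ j) [B ->]; exact: measurable_path_preimage. Qed.

Lemma measurable_Gcount (tau : T -> option nat) n :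
  stopping_time X tau -> measurable_fun setT (Gcount (R:=R) X tau n).
Proof.
move=> st.
pose S i := [set w | X i w = n] `&`
  ~` \bigcup_(j in [set j | (j <= i)%N]) [set w | tau w = Some j].
have mS i : measurable (S i).
  apply: measurableI; first exact: mX.
  by apply/measurableC/bigcup_measurable => j _; exact: measurable_stopping_time.
rewrite (_ : Gcount X tau n = fun w => \sum_(i <oo | i \in xpredT) (\1_(S i) w : R)%:E)%E.
  apply: ge0_emeasurable_sum => [i w _ _|i _]; first by rewrite lee_fin.
  by apply/measurable_EFinP; exact: measurable_indic.
apply/funext => w; apply: eq_eseriesr => i _; rewrite indicE.
congr ((nat_of_bool _)%:R%:E); apply/idP/idP.
  by move=> /andP[/eqP hX /lt_etime H]; rewrite inE /S; split => // -[j jj hj]; apply: H; exists j.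
rewrite inE /S => -[hX H]; rewrite hX eqxx /=; apply/lt_etime => -[j ji hj].
by apply: H; exists j.
Qed.

Lemma measurable_Gcount_hit0 n : (1 <= n)%N ->
  measurable_fun setT (Gcount (R:=R) X (hit0 X) n).
Proof.
move=> n1; rewrite (_ : Gcount X (hit0 X) n = fun w =>
    \sum_(i <oo | i \in xpredT) (\1_(avoid0_at X i n) w : R)%:E)%E.
  apply: ge0_emeasurable_sum => [i w _ _|i _]; first by rewrite lee_fin.
  by apply/measurable_EFinP/measurable_indic; exact: measurable_avoid0_at.
by apply/funext => w; rewrite Gcount_hit0.
Qed.

Lemma measurable_hit0_finite : measurable [set w | hit0 X w <> None].
Proof.
by rewrite hit0_finiteE; apply: bigcup_measurable => i _; exact: measurable_avoid0_at.
Qed.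

End Gcount_measurability.

Lemma natr_eq_of_dist_lt_half (R : realType) (h j : nat) :
  `|(h%:R : R) - j%:R| < 1 / 2 -> h = j.
Proof.
rewrite ltr_norml => /andP[lo hi].
case: (ltngtP h j) => // hj; exfalso.
- have : (h.+1%:R <= j%:R :> R) by rewrite ler_nat.
  rewrite -natr1; lra.
- have : (j.+1%:R <= h%:R :> R) by rewrite ler_nat.
  rewrite -natr1; lra.
Qed.

Lemma near_etime_cvg (R : realType) (t : nat -> option nat) h :
  (fun m => etime (R:=R) (t m)) @ \oo --> ((h%:R : R)%:E) -> \forall m \near \oo, t m = Some h.
Proof.
move=> /fine_cvgP [fin cv].
apply: filterS2 fin (cvgr_dist_lt _ _ cv (1/2) ltac:(lra)) => m /=.
by case: (t m) => [j|] //= _ /natr_eq_of_dist_lt_half ->.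
Qed.

Section green_function.
Context (R : realType) (l r : nat -> R) (k : nat).

Definition green_fun (j : nat) : R :=
  Num.min (xseq l r j) (xseq l r k) / (tseq l r j.-1 * l j).

Hypotheses (hp : bd_rates l r) (k1 : (1 <= k)%N).

Lemma tseqS j : tseq l r j.+1 = tseq l r j * (l j.+1 / r j.+1).
Proof. by rewrite /tseq big_nat_recr. Qed.

Lemma xseqS j : xseq l r j.+1 = xseq l r j + tseq l r j.
Proof. by rewrite /xseq big_nat_recr. Qed.

Lemma tseq_gt0 j : 0 < tseq l r j.
Proof.
elim: j => [|j IH]; first by rewrite /tseq big_geq.
have [l0 [r0 _]] := hp (ltn0Sn j).
by rewrite tseqS mulr_gt0 ?divr_gt0.
Qed.

Lemma xseq_le a b : (a <= b)%N -> xseq l r a <= xseq l r b.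
Proof.
move=> ab; rewrite -(subnKC ab); elim: (b - a)%N => [|c IH]; first by rewrite addn0.
by rewrite addnS xseqS (le_trans IH) // lerDl ltW // tseq_gt0.
Qed.

Lemma green_fun1 : green_fun 1 * l 1%N = 1.
Proof.
have xs1 : xseq l r 1 = 1 by rewrite xseqS /xseq /tseq !big_geq // add0r.
have [l0 _] := hp (ltn0Sn 0).
rewrite /green_fun /= /tseq big_geq // mul1r xs1 (min_idPl _) -?xs1 ?xseq_le //.
by rewrite xs1 mul1r mulVf // lt0r_neq0.
Qed.

(* The net flow across the edge {j, j+1} is 1 below k and 0 above it. *)
Lemma green_fun_flux j : (1 <= j)%N ->
  green_fun j.+1 * l j.+1 = green_fun j * r j + (if (j < k)%N then 1 else 0).
Proof.
move=> j1; have [l0 [r0 _]] := hp j1; have [l1 _] := hp (ltn0Sn j).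
have t0 := tseq_gt0 j.-1; have tj := tseq_gt0 j.
have tS : tseq l r j = tseq l r j.-1 * (l j / r j) by rewrite -{1}(prednK j1) tseqS prednK.
have -> : green_fun j.+1 * l j.+1 = Num.min (xseq l r j.+1) (xseq l r k) / tseq l r j.
  by rewrite /green_fun /=; field; rewrite !lt0r_neq0.
have -> : green_fun j * r j = Num.min (xseq l r j) (xseq l r k) / tseq l r j.
  by rewrite /green_fun tS; field; rewrite !lt0r_neq0.
rewrite xseqS; case: ltnP => jk.
  rewrite (min_idPl (xseq_le (ltnW jk))) -xseqS (min_idPl (xseq_le jk)) xseqS.
  by rewrite mulrDl mulfV ?lt0r_neq0.
rewrite -xseqS !(min_idPr (xseq_le _)) ?addr0 //; exact: leqW.
Qed.

Lemma green_fun_balance j : (1 <= j)%N ->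
  green_fun j = (if j == k then 1 else 0) +
    (if (1 < j)%N then green_fun j.-1 * r j.-1 else 0) + green_fun j.+1 * l j.+1.
Proof.
move=> j1; have [_ [_ lr]] := hp j1.
transitivity (green_fun j * l j + green_fun j * r j); first by rewrite -mulrDr lr mulr1.
rewrite green_fun_flux //.
case: j j1 {lr} => [//|[|j]] _.
  rewrite green_fun1 /=.
  by case: (ltngtP 1 k) => //= h; [lra|lia|lra].
rewrite (green_fun_flux (ltn0Sn j)) /=.
by case: (ltngtP j.+2 k) => h; lra.
Qed.

(* The balance equations determine [g (j+1)] from [g j] and [g (j-1)]. *)
Lemma eq_green_fun (g : nat -> \bar R) : (forall j, (0 <= g j)%E) ->
  (g 1%N * (l 1%N)%:E = 1)%E ->
  (forall j, (1 <= j)%N -> g j = ((if j == k then 1 else 0) +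
     (if (1 < j)%N then g j.-1 * (r j.-1)%:E else 0) + g j.+1 * (l j.+1)%:E)%E) ->
  forall j, (1 <= j)%N -> g j = (green_fun j)%:E.
Proof.
move=> g0 g1 gbal.
have [l1 _] := hp (ltn0Sn 0).
have G1 : g 1%N = (green_fun 1)%:E.
  by apply: (@EFin_affine_unique _ _ 1 0 (l 1%N)); rewrite ?add0e ?add0r ?green_fun1.
suff G j : g j.+1 = (green_fun j.+1)%:E /\ g j.+2 = (green_fun j.+2)%:E.
  by case=> // j _; case: (G j).
elim: j => [|j [Gj GjS]].
  split=> //; have [l2 _] := hp (ltn0Sn 1).
  apply: (@EFin_affine_unique _ _ (green_fun 1) (if 1%N == k then 1 else 0) (l 2%N)) => //.
    by rewrite -G1 (gbal 1%N) //= adde0; case: ifP.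
  by rewrite green_fun_balance //= addr0.
split=> //; have [l3 _] := hp (ltn0Sn j.+2).
apply: (@EFin_affine_unique _ _ (green_fun j.+2)
  ((if j.+2 == k then 1 else 0) + green_fun j.+1 * r j.+1) (l j.+3)) => //.
  by rewrite -GjS gbal //= Gj EFinD; case: ifP.
by rewrite green_fun_balance.
Qed.

End green_function.

Section mean_visits_value.
Context d (T : measurableType d) (R : realType) (P : probability T R)
  (l r : nat -> R) (k : nat) (X : nat -> T -> nat).
Hypotheses (hX : is_bd_chain P l r k X) (hp : bd_rates l r) (k1 : (1 <= k)%N).

Lemma P_hit0_finite : P [set w | hit0 X w <> None] = (mean_visits P X 1 * (l 1%N)%:E)%E.
Proof.
rewrite hit0_finiteE measure_bigcup //; last 2 first.
- by move=> i _; exact: measurable_avoid0_at hX.1 i 0.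
- move=> i1 i2 _ _ [w [[H1 H2] [H3 H4]]].
  by case: (ltngtP i1 i2) => // h; [have := H3 _ h|have := H1 _ h].
transitivity (\sum_(i <oo) P (avoid0_at X i 0))%E.
  by apply: eq_eseriesl => i; rewrite in_setT.
rewrite /mean_visits -nneseriesZr // nneseries_recl0 // (P_avoid0_at0 hX) ifN ?add0e.
  by apply: eq_eseriesr => i _; rewrite -[RHS]add0e; exact: P_avoid0_at_succE hX hp i 0.
by rewrite eq_sym -lt0n.
Qed.

Lemma integral_Gcount_hit0 n : (1 <= n)%N ->
  (\int[P]_w Gcount X (hit0 X) n w = mean_visits P X n)%E.
Proof.
move=> n1; under eq_integral do rewrite Gcount_hit0 //.
rewrite integral_nneseries //.
- apply: eq_eseriesr => i _.
  by rewrite integral_indic ?setIT //; exact: measurable_avoid0_at hX.1 i n.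
- by move=> i; apply/measurable_EFinP/measurable_indic; exact: measurable_avoid0_at hX.1 i n.
Qed.

Lemma mean_visits_green n : (1 <= n)%N -> P [set w | hit0 X w <> None] = 1%E ->
  mean_visits P X n = (green_fun l r k n)%:E.
Proof.
move=> n1 hfin; apply: (eq_green_fun hp k1) => //.
- by move=> j; exact: nneseries_ge0.
- by rewrite -P_hit0_finite.
- by move=> j _; exact: mean_visits_balance.
Qed.

End mean_visits_value.

Section monotone_limit.
Context d (T : measurableType d) (R : realType) (P : probability T R) (X : nat -> T -> nat).
Hypothesis mX : forall m j, measurable [set w | X m w = j].

Lemma cvg_integral_Gcount (Tm : nat -> T -> option nat) n : (1 <= n)%N ->
  P [set w | hit0 X w <> None] = 1%E ->
  (forall m, stopping_time X (Tm m)) ->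
  (forall m w, (etime (Tm m w) <= etime (Tm m.+1 w) :> \bar R)%E) ->
  {ae P, forall w, (fun m => etime (Tm m w) : \bar R) @ \oo --> etime (hit0 X w)} ->
  (fun m => \int[P]_w Gcount X (Tm m) n w)%E @ \oo --> (\int[P]_w Gcount X (hit0 X) n w)%E.
Proof.
move=> n1 hfin hst hmono hae.
pose G m w := Gcount (R:=R) X (Tm m) n w.
have mG m : measurable_fun setT (G m) by exact: measurable_Gcount.
have G0 m w : (0 <= G m w)%E by apply: nneseries_ge0 => i _ _; rewrite lee_fin.
have Gnd w : nondecreasing_seq (G^~ w).
  by apply/nondecreasing_seqP => m; exact: le_Gcount.
have mlim : measurable_fun setT (fun w => limn (G^~ w)).
  by apply: (emeasurable_fun_cvg G) => // w _; exact: ereal_nondecreasing_is_cvgn.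
have fin_ae : \forall w \ae P, hit0 X w <> None.
  exists (~` [set w | hit0 X w <> None]); split => //.
    exact/measurableC/measurable_hit0_finite.
  by rewrite probability_setC ?hfin ?subee //; exact: measurable_hit0_finite.
have lim_ae : ae_eq P setT (fun w => limn (G^~ w)) (Gcount X (hit0 X) n).
  apply: filterS2 hae fin_ae => w cvg_w fin_w _.
  case E: (hit0 X w) fin_w cvg_w => [h|] // _ cvg_w.
  apply/cvg_lim => //; apply: cvg_near_cst.
  by apply: filterS (near_etime_cvg cvg_w) => m hm; rewrite /G /Gcount hm E.
rewrite -(ae_eq_integral _ _ measurableT mlim (measurable_Gcount_hit0 mX n1) lim_ae).
exact: (cvg_monotone_convergence (mu:=P) measurableT mG (fun m w _ => G0 m w) (fun w _ => Gnd w)).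
Qed.

End monotone_limit.

Unset Implicit Arguments.
Set Strict Implicit.

Theorem lemma3 (d : measure_display) (T : measurableType d) (R : realType)
  (P : probability T R) (l r : nat -> R) (k : nat) (X : nat -> T -> nat)
  (Tm : nat -> T -> option nat) :
  (forall n, (1 <= n)%N -> 0 < l n /\ 0 < r n /\ l n + r n = 1) ->
  (1 <= k)%N ->
  is_bd_chain P l r k X ->
  P [set w | hit0 X w <> None] = 1%E ->
  (forall m, stopping_time X (Tm m)) ->
  (forall m w, (etime (Tm m w) <= etime (Tm m.+1 w) :> \bar R)%E) ->
  (forall m, (\int[P]_w (etime (Tm m w) : \bar R) < +oo)%E) ->
  {ae P, forall w, (fun m => etime (Tm m w) : \bar R) @ \oo --> (etime (hit0 X w) : \bar R)} ->
  forall n : nat, (1 <= n)%N ->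
    let v := (Num.min (xseq l r n) (xseq l r k) / (tseq l r n.-1 * l n))%:E in
    (\int[P]_w (Gcount X (hit0 X) n w : \bar R))%E = v /\
    (fun m => (\int[P]_w (Gcount X (Tm m) n w : \bar R))%E) @ \oo --> v.
Proof.
move=> hp k1 hX hfin hst hmono _ hae n n1 v.
have Ev : (\int[P]_w Gcount X (hit0 X) n w)%E = v.
  by rewrite (integral_Gcount_hit0 hX n1) (mean_visits_green hX hp k1 n1 hfin).
split=> //; rewrite -Ev.
exact: (cvg_integral_Gcount hX.1 n1 hfin hst hmono hae).
Qed.
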